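(* Let $\beta\in(0,d]$ and let $Q\subset\mathbb{R}^d$ be a cube. Suppose $C'>0$ is a constant such that $$\sum_{k}\int_{Q_{k}} f \,d\mathcal{H}^{\beta,Q}_{\infty} \leq C' \int_{\cup_{k} Q_{k}} f\,d\mathcal{H}^{\beta,Q}_{\infty}$$ for every non-negative $f$ and every family of non-overlapping cubes $\{Q_{k}\}\subset\mathcal{D}(Q)$ which satisfies $\sum_{Q_{k} \subset Q'}l(Q_{k})^\beta \leq 2l(Q')^\beta$ for each $Q' \in \mathcal{D}(Q)$. Then $$\mathcal{H}^{\beta,Q}_{\infty}\left(\left\{ x: \mathcal{M}^{\beta,Q}_\infty f(x)>t\right\}\right) \leq \frac{C'}{t} \int_{\mathbb{R}^d} |f|\,d\mathcal{H}^{\beta,Q}_{\infty}$$ for all $t>0$ and all $f \in L^1(\mathbb{R}^d;\mathcal{H}^{\beta,Q}_{\infty})$.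
   Context: For a cube $Q=a+[0,\ell)^d$ (cubes are half-open), the dyadic lattice generated by $Q$ is $\mathcal{D}(Q)=\{a+2^{-j}\ell(m+[0,1)^d): j\in\mathbb{Z}, m\in\mathbb{Z}^d\}$. The dyadic Hausdorff content adapted to $Q$ is $\mathcal{H}^{\beta,Q}_{\infty}(E)= \inf \{\sum_{i} l(Q_i)^\beta : E \subset \bigcup_{i} Q_i,\ Q_i \in \mathcal{D}(Q) \}$, $l(\cdot)$ the side length. For $f\ge0$ and a set $A$, $\int_A f\,d\mathcal{H}^{\beta,Q}_\infty=\int_0^\infty \mathcal{H}^{\beta,Q}_\infty(\{x\in A:f(x)>t\})\,dt$. $f$ is $\mathcal{H}^{\beta,Q}_\infty$-quasicontinuous if for every $\epsilon>0$ there is an open $O$ with $\mathcal{H}^{\beta,Q}_\infty(O)<\epsilon$ and $f|_{O^c}$ continuous; $L^1(\mathbb{R}^d;\mathcal{H}^{\beta,Q}_\infty)$ is the set of such $f$ with $\int_{\mathbb{R}^d}|f|\,d\mathcal{H}^{\beta,Q}_\infty<\infty$. The dyadic maximal function is $\mathcal{M}^{\beta,Q}_\infty f(x) = \sup_{Q' \in\mathcal{D}(Q)} \chi_{Q'}(x)\, l(Q')^{-\beta} \int_{Q'} |f| \,d\mathcal{H}^{\beta,Q}_{\infty}$. *)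

From HB Require Import structures.
From mathcomp Require Import all_boot all_order all_algebra.
From mathcomp Require Import all_classical all_reals all_analysis.
Set Implicit Arguments. Unset Strict Implicit. Unset Printing Implicit Defensive.
Import Order.TTheory GRing.Theory Num.Theory.
Import numFieldNormedType.Exports.
Local Open Scope classical_set_scope.
Local Open Scope ring_scope.

(* Points of R^d are row vectors 'rV[R]_d, coordinate i of x is x ord0 i.
   The base cube Q = a + [0,l)^d is given by (a, l) with 0 < l.
   A dyadic cube of D(Q) is indexed by (j, m) : int * ('I_d -> int) and is
   a + 2^{-j} l (m + [0,1)^d). *)

Definition dyidx (d : nat) := (int * ('I_d -> int))%type.

Definition dyside (R : realType) (d : nat) (l : R) (c : dyidx d) : R :=
  l * (2%:R : R) ^ (- c.1).

Definition dycube (R : realType) (d : nat) (a : 'rV[R]_d) (l : R) (c : dyidx d)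
  : set 'rV[R]_d :=
  [set x | forall i : 'I_d,
     a ord0 i + dyside l c * (c.2 i)%:~R <= x ord0 i /\
     x ord0 i < a ord0 i + dyside l c * ((c.2 i)%:~R + 1)].

Definition hcontent (R : realType) (d : nat) (a : 'rV[R]_d) (l beta : R)
  (E : set 'rV[R]_d) : \bar R :=
  ereal_inf [set (\esum_(c in F) ((dyside l c) `^ beta)%:E)%E
            | F in [set F : set (dyidx d) | E `<=` \bigcup_(c in F) dycube a l c]].

Definition choquet (R : realType) (d : nat) (a : 'rV[R]_d) (l beta : R)
  (A : set 'rV[R]_d) (f : 'rV[R]_d -> R) : \bar R :=
  (\int[@lebesgue_measure R]_(t in [set t : R | (0 < t)%R])
     hcontent a l beta [set x | A x /\ (t < f x)%R])%E.

Definition quasicontinuous (R : realType) (d : nat) (a : 'rV[R]_d) (l beta : R)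
  (f : 'rV[R]_d -> R) : Prop :=
  forall eps : R, 0 < eps ->
    exists O : set 'rV[R]_d, open O /\ (hcontent a l beta O < eps%:E)%E /\
      {within ~` O, continuous f}.

Definition L1H (R : realType) (d : nat) (a : 'rV[R]_d) (l beta : R)
  (f : 'rV[R]_d -> R) : Prop :=
  quasicontinuous a l beta f /\
  (choquet a l beta setT (fun x => (`|f x|)%R) < +oo)%E.

Definition dymax (R : realType) (d : nat) (a : 'rV[R]_d) (l beta : R)
  (f : 'rV[R]_d -> R) (x : 'rV[R]_d) : \bar R :=
  ereal_sup (range (fun c : dyidx d =>
    ((\1_(dycube a l c) x)%:E * ((dyside l c) `^ (- beta))%:E
      * choquet a l beta (dycube a l c) (fun y => (`|f y|)%R))%E)).

From HB Require Import structures.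
From mathcomp Require Import all_boot all_order all_algebra.
From mathcomp Require Import all_classical all_reals all_analysis.
From mathcomp Require Import zify ring lra.
Import Order.TTheory GRing.Theory Num.Theory.
Import numFieldNormedType.Exports.
Local Open Scope classical_set_scope.
Local Open Scope ring_scope.
Set Implicit Arguments. Unset Strict Implicit. Unset Printing Implicit Defensive.

(* Let g = |f| and call a dyadic cube Q' large when t l(Q')^beta < int_Q' g dH.
   A point where the maximal function exceeds t lies in a large cube, hence in a
   maximal one: large cubes have side at most (int g dH / t)^(1/beta), and the
   only finiteness used from f in L^1 is that of int g dH.  Maximal large cubes
   are pairwise disjoint; by Zorn's lemma they contain a maximal subfamily J
   satisfying the packing condition.  If a maximal large cube is not in J, adding
   it breaks the packing condition at some Q' containing it, which forces
   l(Q')^beta <= sum_{Q_k in J, Q_k <= Q'} l(Q_k)^beta.  Covering by the maximal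
   such Q' gives H(level set) <= sum_J l(Q_k)^beta <= t^-1 sum_J int_Q_k g dH,
   and the hypothesis bounds the latter by (C'/t) int g dH. *)

Lemma ler_powRV (R : realType) (r x B : R) : 0 < r -> 0 <= x -> x `^ r <= B ->
  x <= B `^ r^-1.
Proof.
move=> r0 x0 xB; rewrite -[x in x <= _](powRr1 x0) -(mulfV (lt0r_neq0 r0)) powRrM.
apply: ge0_ler_powR => //; first by rewrite invr_ge0 ltW.
  by rewrite nnegrE powR_ge0.
by rewrite nnegrE (le_trans _ xB) ?powR_ge0.
Qed.

Lemma dyadic_interval_sub (R : realType) (a0 s y z : R) (m1 m2 : int) (n : nat) :
  0 < s ->
  a0 + s * m1%:~R <= y < a0 + s * (m1%:~R + 1) ->
  a0 + (s * 2 ^+ n) * m2%:~R <= y < a0 + (s * 2 ^+ n) * (m2%:~R + 1) ->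
  a0 + s * m1%:~R <= z < a0 + s * (m1%:~R + 1) ->
  a0 + (s * 2 ^+ n) * m2%:~R <= z < a0 + (s * 2 ^+ n) * (m2%:~R + 1).
Proof.
move=> s0 /andP[y1 y2] /andP[y3 y4] /andP[z1 z2].
move: y1 y2 y3 y4 z1 z2.
have -> : (2 : R) ^+ n = (2 ^ n)%N%:Z%:~R by rewrite -pmulrn natrX.
rewrite -!(intrD _ _ 1) -!mulrA -!intrM.
set N := (2 ^ n)%N%:Z => y1 y2 y3 y4 z1 z2.
(* The endpoints are integer multiples of [s], so overlapping intervals nest. *)
have lo : N * m2 <= m1.
  suff : N * m2 < m1 + 1 by lia.
  by rewrite -(ltr_int R) -(ltr_pM2l s0) -(ltrD2l a0) (le_lt_trans y3 y2).
have hi : m1 + 1 <= N * (m2 + 1).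
  suff : m1 < N * (m2 + 1) by lia.
  by rewrite -(ltr_int R) -(ltr_pM2l s0) -(ltrD2l a0) (le_lt_trans y1 y4).
apply/andP; split.
  by apply: le_trans z1; rewrite lerD2l ler_pM2l // ler_int.
by apply: (lt_le_trans z2); rewrite lerD2l ler_pM2l // ler_int.
Qed.

Section dyadic_cubes.
Variables (R : realType) (d : nat) (a : 'rV[R]_d) (l : R).
Hypothesis l_gt0 : 0 < l.
Local Notation Q := (dycube a l).
Local Notation s := (dyside l).

Lemma dyside_gt0 (c : dyidx d) : 0 < s c.
Proof. by rewrite /dyside mulr_gt0 // exprz_gt0. Qed.

Lemma dyside_le (c1 c2 : dyidx d) : (s c1 <= s c2) = (c2.1 <= c1.1).
Proof. by rewrite /dyside ler_pM2l // ler_eXz2l ?ltr1n // lerN2. Qed.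

Lemma dyside_coarser (c1 c2 : dyidx d) : c2.1 <= c1.1 ->
  s c2 = s c1 * 2 ^+ `|c1.1 - c2.1|%N.
Proof.
move=> le21; rewrite /dyside -mulrA; congr (_ * _).
have e : - c2.1 = - c1.1 + `|c1.1 - c2.1|%N by rewrite gez0_abs ?subr_ge0 //; ring.
by set n := `|_|%N in e *; rewrite e expfzDr.
Qed.

Lemma dycube_sub (c1 c2 : dyidx d) : c2.1 <= c1.1 ->
  Q c1 `&` Q c2 !=set0 -> Q c1 `<=` Q c2.
Proof.
move=> le21 [x [x1 x2]] z z1 i.
have [y1 y2] := x1 i; have [y3 y4] := x2 i; have [w1 w2] := z1 i.
move: y3 y4; rewrite (dyside_coarser le21) => y3 y4.
have := @dyadic_interval_sub R (a ord0 i) (s c1) (x ord0 i) (z ord0 i)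
  (c1.2 i) (c2.2 i) `|c1.1 - c2.1|%N (dyside_gt0 c1).
by rewrite y1 y2 y3 y4 w1 w2 => /(_ isT isT isT) /andP[].
Qed.

Lemma dycube_nested (c1 c2 : dyidx d) :
  Q c1 `&` Q c2 !=set0 -> Q c1 `<=` Q c2 \/ Q c2 `<=` Q c1.
Proof.
move=> meet; have [le21|lt12] := lerP c2.1 c1.1; first by left; apply: dycube_sub.
by right; apply: dycube_sub; [exact: ltW | rewrite setIC].
Qed.

Definition dycorner (c : dyidx d) : 'rV[R]_d :=
  \row_i (a ord0 i + s c * (c.2 i)%:~R).

Lemma dycube_corner (c : dyidx d) : Q c (dycorner c).
Proof.
move=> i; rewrite /dycorner mxE; split => //.
by rewrite ltrD2l ltr_pM2l ?dyside_gt0 // ltrDl.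
Qed.

Hypothesis d_gt0 : (0 < d)%N.

Lemma dyside_le_sub (c1 c2 : dyidx d) : Q c1 `<=` Q c2 -> s c1 <= s c2.
Proof.
move=> sub; rewrite leNgt; apply/negP => lt21.
pose i := Ordinal d_gt0.
pose x : 'rV[R]_d := \row_j (a ord0 j + s c1 * (c1.2 j)%:~R + s c2).
have Qx : Q c1 x.
  move=> j; rewrite /x mxE; split; first by rewrite lerDl ltW // dyside_gt0.
  by rewrite mulrDr mulr1 addrA ltrD2l.
have [+ _] := sub _ (dycube_corner c1) i; have [_ +] := sub _ Qx i.
rewrite /x /dycorner !mxE; have := dyside_gt0 c2; lra.
Qed.

Lemma dycube_inj (c1 c2 : dyidx d) : Q c1 = Q c2 -> c1 = c2.
Proof.
move=> e12.
have e1 : c1.1 = c2.1.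
  by apply/eqP; rewrite eq_le -!dyside_le !dyside_le_sub ?e12.
have es : s c1 = s c2 by rewrite /dyside e1.
case: c1 c2 e1 es e12 => [j1 m1] [j2 m2] /= e1 es e12.
congr (_, _) => //; apply: funext => i; apply/eqP; rewrite -(eqr_int R).
have /(_ i) [u1 _] : Q (j2, m2) (dycorner (j1, m1)).
  by rewrite -e12; apply: dycube_corner.
have /(_ i) [v1 _] : Q (j1, m1) (dycorner (j2, m2)).
  by rewrite e12; apply: dycube_corner.
move: u1 v1; rewrite /dycorner !mxE /= -es => u1 v1.
have s_gt0 := dyside_gt0 (j1, m1).
rewrite eq_le -(ler_pM2l s_gt0) -(lerD2l (a ord0 i)) v1.
by rewrite -(ler_pM2l s_gt0) -(lerD2l (a ord0 i)) u1.
Qed.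

Definition dymaximal (P : dyidx d -> Prop) (c : dyidx d) : Prop :=
  P c /\ forall c', P c' -> Q c `<=` Q c' -> c' = c.

Definition dydisjoint (F : set (dyidx d)) : Prop :=
  forall c1 c2, F c1 -> F c2 -> c1 <> c2 -> Q c1 `&` Q c2 = set0.

Lemma dydisjoint_maximal (P : dyidx d -> Prop) : dydisjoint (dymaximal P).
Proof.
move=> c1 c2 [P1 max1] [P2 max2] ne; apply/nonemptyPn => meet; apply: ne.
by have [/(max1 _ P2)->|/(max2 _ P1)->] := dycube_nested meet.
Qed.

Lemma dylevel_lbound (B : R) :
  exists k0 : int, forall c : dyidx d, s c <= B -> k0 <= c.1.
Proof.
pose N := Num.bound `|B / l|.
exists (- N%:Z) => c sB; rewrite leNgt; apply/negP => lt.
have c_lt0 : c.1 < 0 by apply: lt_le_trans lt _; rewrite oppr_le0.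
have e : - c.1 = `|c.1|%N by rewrite ltz0_abs.
move: sB; rewrite /dyside e; set n := `|c.1|%N => sB.
have Nn : (N%:R : R) < n%:R by rewrite ltr_nat -ltz_nat -e ltrNr.
have n_le : (n%:R : R) <= 2 ^+ n by rewrite -natrX ler_nat ltnW // ltn_expl.
have : B / l < 2 ^+ n.
  have := ler_norm (B / l); have := archi_boundP (normr_ge0 (B / l)); lra.
by rewrite ltr_pdivrMr // mulrC ltNge sB.
Qed.

Lemma dymaximal_exists (P : dyidx d -> Prop) (B : R) :
  (forall c, P c -> s c <= B) ->
  forall c0, P c0 -> exists2 c, dymaximal P c & Q c0 `<=` Q c.
Proof.
move=> PB c0 Pc0; have [k0 k0P] := dylevel_lbound B.
pose above n := `[< exists c, [/\ P c, Q c0 `<=` Q c & c.1 = k0 + n%:Z] >].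
have lvlE c : P c -> c.1 = k0 + `|c.1 - k0|%N.
  by move/PB/k0P => ?; rewrite gez0_abs ?subr_ge0 //; ring.
have [|n /asboolP[c [Pc c0c cn]] nmin] := ex_minnP (P := above).
  by exists `|c0.1 - k0|%N; apply/asboolP; exists c0; split; last exact: lvlE.
exists c => //; split => // c' Pc' cc'.
have le1 : c'.1 <= c.1 by rewrite -dyside_le; apply: dyside_le_sub.
have le2 : c.1 <= c'.1.
  have : (n <= `|c'.1 - k0|)%N.
    apply: nmin; apply/asboolP; exists c'.
    by split; [|exact: subset_trans cc'|exact: lvlE].
  by rewrite -lez_nat; have := lvlE _ Pc'; lia.
apply: dycube_inj; apply/seteqP; split => //; apply: dycube_sub => //.
by exists (dycorner c); split; [apply: cc'|]; apply: dycube_corner.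
Qed.

End dyadic_cubes.

Section extended_sums.
Local Open Scope ereal_scope.
Variables (R : realType) (T : choiceType).
Implicit Types (A B : set T) (f : T -> \bar R).

Lemma esum_subset A B f : A `<=` B -> (forall x, B x -> 0 <= f x) ->
  \esum_(i in A) f i <= \esum_(i in B) f i.
Proof.
move=> AB f0; apply: ge_ereal_sup => _ [X [finX XA] <-].
by apply: ereal_sup_ubound; exists X => //; split => //; apply: subset_trans AB.
Qed.

Lemma esum_mulr_le A f (k : \bar R) : (forall x, 0 <= f x) -> 0 <= k ->
  \esum_(i in A) (f i * k) <= (\esum_(i in A) f i) * k.
Proof.
move=> f0 k0; apply: ge_ereal_sup => _ [X [finX XA] <-].
rewrite -ge0_mule_fsuml //; apply: lee_wpmul2r => //.
by apply: ereal_sup_ubound; exists X.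
Qed.

Lemma esum_setU1_le A x f : (forall y, 0 <= f y) ->
  \esum_(i in A `|` [set x]) f i <= f x + \esum_(i in A) f i.
Proof.
move=> f0; rewrite (esumID [set x]) //; apply: leeD.
  apply: le_trans (esum_subset (B := [set x]) _ _) _ => [y []//|//|].
  by rewrite esum_set1.
by apply: esum_subset => // y [[]].
Qed.

End extended_sums.

Lemma chain_finite_subset (T : choiceType) (F : set (set T)) (X : set T) :
  total_on F subset -> finite_set X -> X `<=` \bigcup_(Y in F) Y ->
  X = set0 \/ exists2 Y, F Y & X `<=` Y.
Proof.
move=> tot /finite_seqP[s ->] {X}.
elim: s => [|x s IH] sF; first by left; rewrite set_nil.
right; have [Y FY Yx] := sF x (mem_head _ _).
have [s0|[Z FZ sZ]] := IH (fun y ys => sF y (@mem_behead _ (x :: s) y ys)).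
  exists Y => // y /=; rewrite inE => /orP[/eqP -> // | ys].
  by have : [set` s] y := ys; rewrite s0.
have [YZ|ZY] := tot _ _ FY FZ.
  by exists Z => // y /=; rewrite inE => /orP[/eqP -> | /sZ]; [exact: YZ|].
by exists Y => // y /=; rewrite inE => /orP[/eqP -> // | /sZ /ZY].
Qed.

Section nonmeasurable_integral.
Local Open Scope ereal_scope.

(* No measurability is needed: the integral of [f] is a supremum over simple
   functions below [f^+], minus one below [f^-], and [f^-] vanishes here. *)
Lemma ge0_le_integral_nonmeasurable dT (T : measurableType dT) (R : realType)
    (mu : {measure set T -> \bar R}) (D : set T) (f1 f2 : T -> \bar R) :
  (forall x, D x -> 0 <= f1 x) -> (forall x, D x -> f1 x <= f2 x) ->
  \int[mu]_(x in D) f1 x <= \int[mu]_(x in D) f2 x.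
Proof.
move=> f10 f12; rewrite /integral.
have neg0 (f : T -> \bar R) : (forall x, D x -> 0 <= f x) -> (f \_ D)^\- = cst 0.
  move=> f0; apply: funext => x; rewrite funenegE /patch /=.
  case: ifPn => [/set_mem/f0 fx|_]; last by rewrite oppe0 maxxx.
  by apply/max_r; rewrite leeNl oppe0.
rewrite (neg0 f1) // (neg0 f2) => [|x Dx]; last exact: le_trans (f10 _ Dx) (f12 _ Dx).
apply: leeB => //; apply: ereal_sup_le => _ [h /= hle <-]; exists h => //= x.
apply: (le_trans (hle x)); rewrite !funeposE /patch; case: ifPn => // /set_mem Dx.
by rewrite ge_max !le_max lexx orbT (f12 _ Dx).
Qed.

End nonmeasurable_integral.

Section hausdorff_content.
Local Open Scope ereal_scope.
Variables (R : realType) (d : nat) (a : 'rV[R]_d) (l beta : R).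
Local Notation H := (hcontent a l beta).
Local Notation choquetH := (choquet a l beta).

Lemma hcontent_ge0 E : 0 <= H E.
Proof.
apply: le_ereal_inf_tmp => _ [F _ <-]; apply: esum_ge0 => c _.
by rewrite lee_fin powR_ge0.
Qed.

Lemma hcontent_le_esum E (F : set (dyidx d)) :
  E `<=` \bigcup_(c in F) dycube a l c ->
  H E <= \esum_(c in F) ((dyside l c) `^ beta)%:E.
Proof. by move=> EF; apply: ereal_inf_lbound; exists F. Qed.

Lemma le_hcontent A B : A `<=` B -> H A <= H B.
Proof.
move=> AB; apply: ereal_inf_le_tmp => _ [F FB <-]; exists F => //.
exact: subset_trans FB.
Qed.

Lemma choquet_ge0 A g : 0 <= choquetH A g.
Proof. by apply: integral_ge0 => t _; apply: hcontent_ge0. Qed.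

Lemma le_choquet A B g : A `<=` B -> choquetH A g <= choquetH B g.
Proof.
move=> AB; apply: ge0_le_integral_nonmeasurable => t _; first exact: hcontent_ge0.
by apply: le_hcontent => x [Ax gx]; split => //; apply: AB.
Qed.

End hausdorff_content.

Section packing.
Local Open Scope ereal_scope.
Variables (R : realType) (d : nat) (a : 'rV[R]_d) (l beta : R).
Local Notation Q := (dycube a l).
Local Notation w c := ((dyside l c) `^ beta)%R.

Definition dypacking (F : set (dyidx d)) : Prop :=
  forall c', \esum_(c in [set c | F c /\ Q c `<=` Q c']) (w c)%:E <= (2 * w c')%:E.

Definition dymaximal_packing (G J : set (dyidx d)) : Prop :=
  [/\ J `<=` G, dypacking J & forall J', J `<` J' -> J' `<=` G -> ~ dypacking J'].

Definition dyheavy (J : set (dyidx d)) (c : dyidx d) : Prop :=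
  (w c)%:E <= \esum_(c0 in [set c0 | J c0 /\ Q c0 `<=` Q c]) (w c0)%:E.

Lemma dypacking_bigcup (F : set (set (dyidx d))) :
  (forall J, F J -> dypacking J) -> total_on F subset ->
  dypacking (\bigcup_(J in F) J).
Proof.
move=> Fpack tot c'; apply: ge_ereal_sup => _ [X [finX XS] <-].
have [->|[J FJ XJ]] := chain_finite_subset tot finX (fun x Xx => (XS x Xx).1).
  by rewrite fsbig_set0 lee_fin mulr_ge0 ?powR_ge0.
apply: le_trans (Fpack J FJ c'); apply: ereal_sup_ubound; exists X => //.
by split => // x Xx; split; [exact: XJ | exact: (XS x Xx).2].
Qed.

Lemma dymaximal_packing_exists (G : set (dyidx d)) :
  exists J, dymaximal_packing G J.
Proof.
have [J [[JG Jpack] Jmax]] := Zorn_bigcup (P := fun J => J `<=` G /\ dypacking J)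
  (fun F FP tot => conj (fun c '(ex_intro2 J FJ Jc) => (FP J FJ).1 c Jc)
                        (dypacking_bigcup (fun J FJ => (FP J FJ).2) tot)).
by exists J; split => // J' JJ' J'G J'pack; apply: (Jmax J').
Qed.

Hypotheses (l_gt0 : (0 < l)%R) (d_gt0 : (0 < d)%N) (beta_gt0 : (0 < beta)%R).

Lemma dymaximal_packing_heavy (G J : set (dyidx d)) (c : dyidx d) :
  dymaximal_packing G J -> G c -> exists2 c', dyheavy J c' & Q c `<=` Q c'.
Proof.
move=> [JG Jpack Jmax] Gc.
have w0 (c0 : dyidx d) : 0 <= (w c0)%:E by rewrite lee_fin powR_ge0.
have [Jc|nJc] := pselect (J c).
  exists c => //; rewrite /dyheavy.
  have := @esum_subset _ _ [set c] _ (fun c0 => (w c0)%:E).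
  by rewrite esum_set1 //; apply => // _ ->; split.
have : ~ dypacking (J `|` [set c]).
  apply: Jmax; last by move=> c0 [/JG|->].
  by split; [exact: subsetUl | move=> JcJ; apply: nJc; apply: JcJ; right].
move=> /existsNP[c' /negP]; rewrite -ltNge => overfull.
have cc' : Q c `<=` Q c'.
  apply: contrapT => ncc'; move: overfull; rewrite ltNge => /negP; apply.
  apply: le_trans (Jpack c'); apply: esum_subset => // c0 [[Jc0|->] //].
have {}overfull : (2 * w c')%:E
    < (w c)%:E + \esum_(c0 in [set c0 | J c0 /\ Q c0 `<=` Q c']) (w c0)%:E.
  apply: lt_le_trans overfull _; apply: le_trans (esum_setU1_le _ _ w0).
  by apply: esum_subset => // c0 [[Jc0|->]] sub; [left | right].
exists c' => //; rewrite /dyheavy.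
have : (w c <= w c')%R.
  apply: ge0_ler_powR; rewrite ?(ltW beta_gt0) ?nnegrE ?(ltW (dyside_gt0 _ _)) //.
  exact: (dyside_le_sub l_gt0 d_gt0 cc').
move: overfull; case: (\esum_(_ in _) _) => [S||] //; last by rewrite leey.
by rewrite -EFinD !lte_fin lee_fin => ? ?; lra.
Qed.

Lemma esum_blocks_le (M J : set (dyidx d)) (f : dyidx d -> \bar R) :
  dydisjoint a l M -> (forall c, 0 <= f c) ->
  \esum_(c in M) \esum_(c0 in [set c0 | J c0 /\ Q c0 `<=` Q c]) f c0
    <= \esum_(c0 in J) f c0.
Proof.
move=> Mdisj f0; rewrite (esum_esum (a := fun _ => f)) // -(esum_image _ snd) //.
  by apply: esum_subset => // _ [[c c0] [_ [Jc0 _]] <-].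
move=> [c c0] [c' c0'] /=; rewrite !inE => -[/= Mc [_ c0c]] [/= Mc' [_ c0c']] /= e.
subst c0'; congr (_, _); apply: contrapT => cc'.
have meet : Q c `&` Q c' !=set0.
  by exists (dycorner a l c0); split; [apply: c0c | apply: c0c']; apply: dycube_corner.
by have /nonemptyPn := Mdisj _ _ Mc Mc' cc'.
Qed.

Lemma hcontent_le_maximal_packing (G J : set (dyidx d)) :
  dymaximal_packing G J ->
  hcontent a l beta (\bigcup_(c in G) Q c) <= \esum_(c in J) (w c)%:E.
Proof.
move=> GJ; have w0 (c : dyidx d) : 0 <= (w c)%:E by rewrite lee_fin powR_ge0.
set S := \esum_(c in J) (w c)%:E.
have [->|Soo] := eqVneq S +oo; first by rewrite leey.
have SE : S = (fine S)%:E.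
  by rewrite fineK // ge0_fin_numE ?lt_neqAle ?Soo ?leey // esum_ge0.
have heavy_side c : dyheavy J c -> (dyside l c <= fine S `^ beta^-1)%R.
  move=> Jc; apply: ler_powRV => //; first exact: ltW (dyside_gt0 _ _).
  by rewrite -lee_fin -SE; apply: le_trans Jc _; apply: esum_subset => // ? [].
have cover :
    \bigcup_(c in G) Q c `<=` \bigcup_(c in dymaximal a l (dyheavy J)) Q c.
  move=> x [c0 Gc0 Qx]; have [c1 heavy1 c0c1] := dymaximal_packing_heavy GJ Gc0.
  have [c2 max2 c1c2] := dymaximal_exists a l_gt0 d_gt0 heavy_side heavy1.
  by exists c2 => //; apply/c1c2/c0c1.
apply: le_trans (hcontent_le_esum beta cover) _.
have heavy_disj := @dydisjoint_maximal _ _ a l l_gt0 (dyheavy J).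
apply: le_trans (esum_blocks_le J heavy_disj w0).
by apply: le_esum => c [].
Qed.

End packing.

Section maximal_function.
Local Open Scope ereal_scope.
Variables (R : realType) (d : nat) (a : 'rV[R]_d) (l beta : R).
Hypotheses (l_gt0 : (0 < l)%R) (beta_gt0 : (0 < beta)%R).
Local Notation Q := (dycube a l).
Local Notation w c := ((dyside l c) `^ beta)%R.

Definition dylarge (t : R) (g : 'rV[R]_d -> R) (c : dyidx d) : Prop :=
  (t * w c)%:E < choquet a l beta (Q c) g.

Lemma dymax_gt_large (t : R) (f : 'rV[R]_d -> R) (x : 'rV[R]_d) : (0 < t)%R ->
  t%:E < dymax a l beta f x -> exists2 c, dylarge t (fun y => `|f y|)%R c & Q c x.
Proof.
move=> t_gt0 /ereal_sup_gt[_ [c _ <-]].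
have [Qcx|nQcx] := pselect (Q c x); last first.
  by rewrite indicE memNset //= !mul0e lte_fin ltNge (ltW t_gt0).
move=> gt; exists c => //; move: gt (choquet_ge0 a l beta (Q c) (fun y => `|f y|)%R).
rewrite /dylarge indicE mem_set //= mul1e powRN.
case: (choquet _ _ _ _ _) => [r||] //=; rewrite ?ltry // -EFinM !lte_fin mulrC.
by rewrite -ltr_pdivlMr ?powR_gt0 ?dyside_gt0.
Qed.

Lemma dylarge_side_le (t : R) (g : 'rV[R]_d -> R) (c : dyidx d) : (0 < t)%R ->
  choquet a l beta setT g < +oo -> dylarge t g c ->
  (dyside l c <= (fine (choquet a l beta setT g) / t) `^ beta^-1)%R.
Proof.
move=> t_gt0 g_fin large; apply: ler_powRV => //; first exact: ltW (dyside_gt0 _ _).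
rewrite ler_pdivlMr // mulrC -lee_fin fineK ?ge0_fin_numE ?choquet_ge0 //.
exact/ltW/(lt_le_trans large)/le_choquet.
Qed.

Lemma esum_large_le (t : R) (g : 'rV[R]_d -> R) (F : set (dyidx d)) : (0 < t)%R ->
  F `<=` dylarge t g ->
  \esum_(c in F) (w c)%:E <= (t^-1)%:E * \esum_(c in F) choquet a l beta (Q c) g.
Proof.
move=> t_gt0 Flarge; have t_inv0 : 0 <= (t^-1)%:E by rewrite lee_fin invr_ge0 ltW.
rewrite muleC.
apply: le_trans (esum_mulr_le F (fun c => choquet_ge0 a l beta (Q c) g) t_inv0).
apply: le_esum => c /Flarge/ltW/(lee_wpmul2r t_inv0).
by rewrite -EFinM mulrAC mulfV ?gt_eqF // mul1r.
Qed.

Hypothesis d_gt0 : (0 < d)%N.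

Lemma dymax_level_sub (t : R) (f : 'rV[R]_d -> R) : (0 < t)%R ->
  choquet a l beta setT (fun y => `|f y|)%R < +oo ->
  [set x | t%:E < dymax a l beta f x]
    `<=` \bigcup_(c in dymaximal a l (dylarge t (fun y => `|f y|)%R)) Q c.
Proof.
move=> t_gt0 f_fin x /(dymax_gt_large t_gt0)[c large Qcx].
have [c' max' cc'] := dymaximal_exists a l_gt0 d_gt0
  (fun c => dylarge_side_le (c := c) t_gt0 f_fin) large.
by exists c' => //; apply: cc'.
Qed.

End maximal_function.

Unset Implicit Arguments.

Theorem theorem3p1 (R : realType) (d : nat) (beta : R) (a : 'rV[R]_d) (l : R)
  (C' : R) :
  0 < beta -> beta <= d%:R -> 0 < l -> 0 < C' ->
  (forall (f : 'rV[R]_d -> R) (F : set (dyidx d)),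
     (forall x, 0 <= f x) ->
     (forall c1 c2, F c1 -> F c2 -> c1 <> c2 ->
        dycube a l c1 `&` dycube a l c2 = set0) ->
     (forall c' : dyidx d,
        (\esum_(c in [set c | F c /\ dycube a l c `<=` dycube a l c'])
            ((dyside l c) `^ beta)%:E
          <= (2 * (dyside l c') `^ beta)%:E)%E) ->
     (\esum_(c in F) choquet a l beta (dycube a l c) f
       <= C'%:E * choquet a l beta (\bigcup_(c in F) dycube a l c) f)%E) ->
  forall (t : R) (f : 'rV[R]_d -> R), 0 < t -> L1H a l beta f ->
    (hcontent a l beta [set x | (t%:E < dymax a l beta f x)%E]
      <= (C' / t)%:E * choquet a l beta setT (fun x => (`|f x|)%R))%E.
Proof.
move=> beta_gt0 beta_le_d l_gt0 C'_gt0 packing_bound t f t_gt0 [_ f_fin].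
have d_gt0 : (0 < d)%N by rewrite -(ltr0n R) (lt_le_trans beta_gt0).
set g := fun x => `|f x|.
have [J maxJ] :=
  dymaximal_packing_exists a l beta (dymaximal a l (dylarge a l beta t g)).
have [JG Jpack _] := maxJ.
have level_sub := dymax_level_sub l_gt0 beta_gt0 d_gt0 t_gt0 f_fin.
apply: le_trans (le_hcontent a l beta level_sub) _.
apply: le_trans (hcontent_le_maximal_packing l_gt0 d_gt0 beta_gt0 maxJ) _.
apply: le_trans (esum_large_le t_gt0 (fun c Jc => (JG c Jc).1)) _.
rewrite mulrC EFinM -muleA; apply: lee_wpmul2l; first by rewrite lee_fin invr_ge0 ltW.
have Jdisj : dydisjoint a l J.
  by move=> c1 c2 /JG G1 /JG G2; apply: (dydisjoint_maximal l_gt0 G1 G2).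
apply: le_trans (packing_bound g J (fun=> normr_ge0 _) Jdisj Jpack) _.
by apply: lee_wpmul2l; [rewrite lee_fin ltW | apply: le_choquet].
Qed.
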